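(* Let $\mathbb{I}>0$, $\xi>0$, $0<c\le1$, and for $\ell>0$ let $g_{c,\xi}(\ell)=4c\ell^2\int_0^\infty u^2\,\Phi\big(-\frac{u\ell\xi\sqrt{c\mathbb{I}}}{2}\big)\phi(u)\,du$. Then $g_{c,\xi}$ is maximized at $\ell_{opt}=\frac{2.426}{\xi\sqrt{c\,\mathbb{I}}}$ (constant to three decimals), and $$\alpha_{opt}=4\int_0^\infty\Phi\Big(-\frac{u\ell_{opt}\xi\sqrt{c\,\mathbb{I}}}{2}\Big)\phi(u)\,du=0.439$$ up to three decimal places.
   Context: $\Phi,\phi$ are the standard normal cdf and density; $g_{c,\xi}$ is the diffusion speed of the limiting diffusion of additive TMCMC-within-Gibbs for independent non-identically scaled product targets and $\alpha_{opt}$ the corresponding optimal acceptance rate. *)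

From Stdlib Require Import Reals.
From Coquelicot Require Import Coquelicot.
Open Scope R_scope.

Definition std_normal_pdf (u : R) : R := exp (- (u ^ 2) / 2) / sqrt (2 * PI).

Definition std_normal_cdf (x : R) : R :=
  RInt_gen std_normal_pdf (Rbar_locally m_infty) (at_point x).

Definition int_0_infty (f : R -> R) : R :=
  RInt_gen f (at_point 0) (Rbar_locally p_infty).

Definition g_speed (I c xi l : R) : R :=
  4 * c * l ^ 2 *
  int_0_infty (fun u => u ^ 2 * std_normal_cdf (- (u * l * xi * sqrt (c * I)) / 2)
                               * std_normal_pdf u).

Definition accept_rate (I c xi l : R) : R :=
  4 * int_0_infty (fun u => std_normal_cdf (- (u * l * xi * sqrt (c * I)) / 2)
                            * std_normal_pdf u).

(* Write [Phi = 1/2 + E] with [E x = int_0^x phi].  Owen's function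
   [T(h, a) = 1/(2 PI) int_0^a exp(-h^2 (1+x^2)/2) / (1+x^2) dx] satisfies
   [d/dh T(h, a) = - phi(h) E(a h)], which yields explicit antiderivatives and, for
   [a >= 0],
     int_0^oo Phi(-a u) phi(u) du = 1/4 - atan a / (2 PI),
     int_0^oo u^2 Phi(-a u) phi(u) du = 1/4 - atan a / (2 PI) - a / (2 PI (1 + a^2)).
   The limits at infinity follow from [E(u)^2 = 1/4 - 2 T(u, 1)], which gives
   [|E u - 1/2| <= exp(-u^2/2)].  With [a = l xi sqrt(c I) / 2], [g] is a positive
   multiple of [a^2] times the second integral; its derivative has the sign of
   [PI/2 - atan a - a/(1+a^2) - a/(1+a^2)^2], which decreases up to [7/5], is negative
   beyond, and vanishes at some [a_opt] in [[1.2131, 1.21325]].  Then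
   [l_opt = 2 a_opt / (xi sqrt(c I))] and [alpha_opt = 1 - 2 atan a_opt / PI]. *)

From Stdlib Require Import Reals Lra.
From Coquelicot Require Import Coquelicot.
Open Scope R_scope.

Lemma is_derive_eq (f : R -> R) x l1 l2 : is_derive f x l1 -> l1 = l2 -> is_derive f x l2.
Proof. now intros H <-. Qed.

Lemma continuous_of_is_derive (f : R -> R) x l : is_derive f x l -> continuous f x.
Proof. intros H. apply (@ex_derive_continuous R_AbsRing R_NormedModule). now exists l. Qed.

Lemma is_derive_0_constant (f : R -> R) :
  (forall x, is_derive f x 0) -> forall x y, f x = f y.
Proof.
  intros H.
  assert (K : forall a b, a < b -> f a = f b).
  { intros a b Hab.
    destruct (MVT_cor2 f (fun _ => 0) a b Hab) as [c [Hc _]].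
    - intros c _. apply is_derive_Reals, H.
    - lra. }
  intros x y. destruct (Rtotal_order x y) as [h|[h|h]].
  - now apply K.
  - now subst.
  - symmetry; now apply K.
Qed.

Lemma filterlim_p_infty_of_decay (f : R -> R) (L C : R) :
  0 <= C -> (forall u, 1 <= u -> Rabs (f u - L) <= C / u) ->
  filterlim f (Rbar_locally p_infty) (locally L).
Proof.
  intros HC H. apply filterlim_locally. intros eps.
  assert (Hep := cond_pos eps).
  exists (Rmax 1 (C / eps)). intros x Hx.
  assert (H1 : 1 < x) by (generalize (Rmax_l 1 (C / eps)); lra).
  assert (H2 : C / eps < x) by (generalize (Rmax_r 1 (C / eps)); lra).
  change (Rabs (f x - L) < eps).
  apply Rle_lt_trans with (C / x). { apply H; lra. }
  apply Rmult_lt_reg_r with x; [lra|].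
  unfold Rdiv. rewrite Rmult_assoc, Rinv_l by lra.
  apply Rmult_lt_reg_r with (/ eps). { apply Rinv_0_lt_compat; lra. }
  replace (eps * x * / eps) with x by (field; lra). lra.
Qed.

Lemma filterlim_m_infty_of_decay (f : R -> R) (L C : R) :
  0 <= C -> (forall u, 1 <= u -> Rabs (f (- u) - L) <= C / u) ->
  filterlim f (Rbar_locally m_infty) (locally L).
Proof.
  intros HC H.
  assert (K := filterlim_p_infty_of_decay (fun u => f (- u)) L C HC H).
  apply filterlim_locally. intros eps.
  apply filterlim_locally with (eps := eps) in K.
  destruct K as [M HM]. exists (- M). intros x Hx.
  replace x with (- - x) by ring. apply HM. lra.
Qed.

Lemma filterlim_at_point_self (f : R -> R) x : filterlim f (at_point x) (locally (f x)).
Proof. intros P HP. unfold filtermap, at_point. now apply locally_singleton. Qed.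

Lemma is_RInt_gen_antiderivative (F f : R -> R) (Fa Fb : (R -> Prop) -> Prop)
  {FFa : Filter Fa} {FFb : Filter Fb} (la lb : R) :
  (forall x, is_derive F x (f x)) -> (forall x, continuous f x) ->
  filterlim F Fa (locally la) -> filterlim F Fb (locally lb) ->
  is_RInt_gen f Fa Fb (lb - la).
Proof.
  intros HD HC Ha Hb.
  apply (is_RInt_gen_ext (Derive F)).
  - apply filter_forall. intros ab x _. apply is_derive_unique, HD.
  - apply (is_RInt_gen_Derive F); auto.
    + apply filter_forall. intros ab x _. eexists; apply HD.
    + apply filter_forall. intros ab x _.
      apply (continuous_ext (T := R_UniformSpace) (U := R_UniformSpace) f).
      * intros; symmetry; apply is_derive_unique, HD.
      * apply HC.
Qed.

Lemma one_add_sq_pos x : 0 < 1 + x ^ 2.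
Proof. nra. Qed.

Lemma exp_ge_sqr_one_add_half y : 0 <= y -> (1 + y / 2) ^ 2 <= exp y.
Proof.
  intros Hy. replace y with (y / 2 + y / 2) at 2 by field.
  rewrite exp_plus. generalize (exp_ineq1_le (y / 2)). simpl. nra.
Qed.

Lemma exp_neg_sq_half_le_inv u : 0 < u -> exp (- (u ^ 2) / 2) <= 1 / u.
Proof.
  intros Hu. assert (H := exp_ineq1_le (u ^ 2 / 2)).
  replace (- (u ^ 2) / 2) with (- (u ^ 2 / 2)) by field.
  rewrite exp_Ropp. assert (0 < exp (u ^ 2 / 2)) by apply exp_pos.
  apply Rmult_le_reg_r with (exp (u ^ 2 / 2) * u); [nra|].
  field_simplify; nra.
Qed.

Lemma mul_exp_neg_sq_half_le u : 0 < u -> u * exp (- (u ^ 2) / 2) <= 2 / u.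
Proof.
  intros Hu. assert (H := exp_ge_sqr_one_add_half (u ^ 2 / 2) ltac:(nra)).
  replace (- (u ^ 2) / 2) with (- (u ^ 2 / 2)) by field.
  rewrite exp_Ropp. assert (0 < exp (u ^ 2 / 2)) by apply exp_pos.
  apply Rmult_le_reg_r with (exp (u ^ 2 / 2) * u); [nra|].
  field_simplify; nra.
Qed.

Lemma exp_neg_sq_half_mono u a : exp (- ((1 + a ^ 2) * u ^ 2) / 2) <= exp (- (u ^ 2) / 2).
Proof.
  destruct (Req_dec (- ((1 + a ^ 2) * u ^ 2) / 2) (- (u ^ 2) / 2)) as [e|e].
  - rewrite e; lra.
  - apply Rlt_le, exp_increasing. nra.
Qed.

Lemma sqrt_2PI_pos : 0 < sqrt (2 * PI).
Proof. apply sqrt_lt_R0. generalize PI_RGT_0; lra. Qed.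

Lemma std_normal_pdf_derive x : is_derive std_normal_pdf x (- x * std_normal_pdf x).
Proof.
  unfold std_normal_pdf. auto_derive; auto.
  unfold Rdiv; simpl. field. generalize sqrt_2PI_pos; lra.
Qed.

Lemma std_normal_pdf_continuous x : continuous std_normal_pdf x.
Proof. eapply continuous_of_is_derive, std_normal_pdf_derive. Qed.

Lemma std_normal_pdf_opp x : std_normal_pdf (- x) = std_normal_pdf x.
Proof. unfold std_normal_pdf. do 3 f_equal. ring. Qed.

Lemma std_normal_pdf_pos x : 0 < std_normal_pdf x.
Proof. apply Rdiv_lt_0_compat; [apply exp_pos | apply sqrt_2PI_pos]. Qed.

Lemma std_normal_pdf_mul a u :
  std_normal_pdf u * std_normal_pdf (a * u) = exp (- ((1 + a ^ 2) * u ^ 2) / 2) / (2 * PI).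
Proof.
  unfold std_normal_pdf.
  replace (- ((1 + a ^ 2) * u ^ 2) / 2) with (- u ^ 2 / 2 + - (a * u) ^ 2 / 2) by field.
  assert (S : sqrt (2 * PI) * sqrt (2 * PI) = 2 * PI)
    by (apply sqrt_sqrt; generalize PI_RGT_0; lra).
  assert (Hs := sqrt_2PI_pos).
  rewrite exp_plus. set (s := sqrt (2 * PI)) in *. rewrite <- S. field. lra.
Qed.

Lemma mul_std_normal_pdf_bounds u : 0 < u -> 0 <= u * std_normal_pdf u <= 2 / u.
Proof.
  intros Hu. assert (H1 : 1 < sqrt (2 * PI)).
  { rewrite <- sqrt_1. apply sqrt_lt_1; generalize PI_RGT_0, PI2_3_2; lra. }
  assert (H2 := exp_pos (- (u ^ 2) / 2)).
  assert (H3 := mul_exp_neg_sq_half_le u Hu).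
  assert (H4 : std_normal_pdf u <= exp (- (u ^ 2) / 2)).
  { unfold std_normal_pdf. apply Rmult_le_reg_r with (sqrt (2 * PI)); [lra|].
    unfold Rdiv. rewrite Rmult_assoc, Rinv_l by lra. nra. }
  assert (H5 := std_normal_pdf_pos u). nra.
Qed.

Lemma ex_RInt_std_normal_pdf a b : ex_RInt std_normal_pdf a b.
Proof. apply (@ex_RInt_continuous R_CompleteNormedModule). intros; apply std_normal_pdf_continuous. Qed.

Definition centered_cdf (x : R) := RInt std_normal_pdf 0 x.

Lemma centered_cdf_derive x : is_derive centered_cdf x (std_normal_pdf x).
Proof.
  apply is_derive_RInt with 0.
  - apply filter_forall. intros b. apply RInt_correct, ex_RInt_std_normal_pdf.
  - apply std_normal_pdf_continuous.
Qed.

Lemma centered_cdf_scale_derive a u :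
  is_derive (fun u => centered_cdf (a * u)) u (a * std_normal_pdf (a * u)).
Proof.
  apply (is_derive_comp centered_cdf (fun u => a * u)).
  - apply centered_cdf_derive.
  - auto_derive; auto. ring.
Qed.

Lemma centered_cdf_0 : centered_cdf 0 = 0.
Proof. apply (@RInt_point R_CompleteNormedModule). Qed.

Lemma centered_cdf_opp x : centered_cdf (- x) = - centered_cdf x.
Proof.
  assert (H : forall y, centered_cdf (- y) + centered_cdf y
                      = centered_cdf (- 0) + centered_cdf 0).
  { intros z.
    apply is_derive_0_constant with (f := fun y => centered_cdf (- y) + centered_cdf y).
    intros y. eapply is_derive_eq.
    - apply @is_derive_plus.
      + apply is_derive_comp. apply centered_cdf_derive. auto_derive; auto.
      + apply centered_cdf_derive.
    - rewrite std_normal_pdf_opp. simpl. unfold plus, scal; simpl; unfold mult; simpl. ring. }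
  specialize (H x). rewrite Ropp_0, centered_cdf_0 in H. lra.
Qed.

Lemma centered_cdf_ge0 u : 0 <= u -> 0 <= centered_cdf u.
Proof.
  intros Hu. apply RInt_ge_0; auto. apply ex_RInt_std_normal_pdf.
  intros; apply Rlt_le, std_normal_pdf_pos.
Qed.

Definition owen_T_integrand (h x : R) : R := exp (- (h ^ 2 * (1 + x ^ 2)) / 2) / (1 + x ^ 2).
Definition owen_T_integrand_dh (h x : R) : R := - (h * exp (- (h ^ 2 * (1 + x ^ 2)) / 2)).
Definition owen_T (h a : R) : R := / (2 * PI) * RInt (owen_T_integrand h) 0 a.

Lemma owen_T_integrand_derive_h h x :
  is_derive (fun h => owen_T_integrand h x) h (owen_T_integrand_dh h x).
Proof.
  assert (H := one_add_sq_pos x). unfold owen_T_integrand, owen_T_integrand_dh.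
  auto_derive; simpl in *; [lra|]. unfold Rdiv. field. lra.
Qed.

Lemma owen_T_integrand_dh_continuous h x : continuity_2d_pt owen_T_integrand_dh h x.
Proof.
  apply continuity_2d_pt_ext with
    (f := fun u v => - (u * exp (- (u * u * (1 + v * v)) * / 2))).
  { intros; unfold owen_T_integrand_dh; simpl. unfold Rdiv. repeat f_equal; ring. }
  apply continuity_2d_pt_opp, continuity_2d_pt_mult; [apply continuity_2d_pt_id1|].
  apply continuity_1d_2d_pt_comp with (f := exp).
  { apply derivable_continuous_pt, derivable_pt_exp. }
  apply continuity_2d_pt_mult; [|apply continuity_2d_pt_const].
  apply continuity_2d_pt_opp, continuity_2d_pt_mult.
  - apply continuity_2d_pt_mult; apply continuity_2d_pt_id1.
  - apply continuity_2d_pt_plus; [apply continuity_2d_pt_const|].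
    apply continuity_2d_pt_mult; apply continuity_2d_pt_id2.
Qed.

Lemma ex_RInt_owen_T_integrand h a b : ex_RInt (owen_T_integrand h) a b.
Proof.
  apply (@ex_RInt_continuous R_CompleteNormedModule). intros x _.
  apply (@ex_derive_continuous R_AbsRing R_NormedModule).
  assert (H := one_add_sq_pos x). unfold owen_T_integrand. auto_derive. simpl in H; lra.
Qed.

Lemma RInt_owen_T_integrand_dh h a :
  RInt (owen_T_integrand_dh h) 0 a
  = - (exp (- (h ^ 2) / 2) * sqrt (2 * PI)) * centered_cdf (h * a).
Proof.
  transitivity (RInt (fun x => scal (- (exp (- (h ^ 2) / 2) * sqrt (2 * PI)))
                   (scal h (std_normal_pdf (h * x + 0)))) 0 a).
  { apply RInt_ext. intros x _. unfold owen_T_integrand_dh, std_normal_pdf.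
    rewrite Rplus_0_r.
    replace (- (h ^ 2 * (1 + x ^ 2)) / 2) with (- (h ^ 2) / 2 + - ((h * x) ^ 2) / 2) by field.
    rewrite exp_plus. unfold scal; simpl; unfold mult; simpl.
    field. generalize sqrt_2PI_pos; lra. }
  rewrite (@RInt_scal R_CompleteNormedModule).
  2:{ apply (@ex_RInt_comp_lin R_CompleteNormedModule), ex_RInt_std_normal_pdf. }
  rewrite (@RInt_comp_lin R_CompleteNormedModule) by apply ex_RInt_std_normal_pdf.
  unfold scal; simpl; unfold mult; simpl. unfold centered_cdf. f_equal. f_equal; ring.
Qed.

Lemma owen_T_derive_h h a :
  is_derive (fun h => owen_T h a) h (- std_normal_pdf h * centered_cdf (a * h)).
Proof.
  apply is_derive_eq with
    (/ (2 * PI) * RInt (fun x => Derive (fun h => owen_T_integrand h x) h) 0 a).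
  - apply is_derive_scal, is_derive_RInt_param.
    + apply filter_forall. intros y t _. eexists. apply owen_T_integrand_derive_h.
    + intros t _. apply continuity_2d_pt_ext with (f := owen_T_integrand_dh).
      * intros; symmetry; apply is_derive_unique, owen_T_integrand_derive_h.
      * apply owen_T_integrand_dh_continuous.
    + apply filter_forall. intros y. apply ex_RInt_owen_T_integrand.
  - rewrite (RInt_ext _ (owen_T_integrand_dh h))
      by (intros; apply is_derive_unique, owen_T_integrand_derive_h).
    rewrite RInt_owen_T_integrand_dh, (Rmult_comm h a). unfold std_normal_pdf.
    match goal with |- ?x = ?y => change (@eq R x y) end.
    field_simplify_eq; [|split; [generalize sqrt_2PI_pos|generalize PI_RGT_0]; lra].
    rewrite <- (Rsqr_pow2 (sqrt (2 * PI))), Rsqr_sqrt by (generalize PI_RGT_0; lra). ring.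
Qed.

Lemma owen_T_0_l a : owen_T 0 a = atan a / (2 * PI).
Proof.
  unfold owen_T.
  rewrite (RInt_ext _ (fun x => / (1 + x ^ 2))).
  2:{ intros x _. unfold owen_T_integrand.
      replace (- (0 ^ 2 * (1 + x ^ 2)) / 2) with 0 by (simpl; field).
      rewrite exp_0. change (1 / (1 + x ^ 2) = / (1 + x ^ 2)).
      field. generalize (one_add_sq_pos x); lra. }
  rewrite (is_RInt_unique _ 0 a (minus (atan a) (atan 0))).
  - unfold minus, plus, opp; simpl. rewrite atan_0. field. generalize PI_RGT_0; lra.
  - apply (@is_RInt_derive R_CompleteNormedModule).
    + intros x _. apply is_derive_Reals, derivable_pt_lim_atan.
    + intros x _. apply (@ex_derive_continuous R_AbsRing R_NormedModule).
      auto_derive. generalize (one_add_sq_pos x); simpl; lra.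
Qed.

Lemma owen_T_bounds h a : 0 <= a -> 0 <= owen_T h a <= a / (2 * PI) * exp (- (h ^ 2) / 2).
Proof.
  intros Ha. unfold owen_T.
  assert (HP : 0 < / (2 * PI)) by (apply Rinv_0_lt_compat; generalize PI_RGT_0; lra).
  assert (B : forall x, 0 <= owen_T_integrand h x <= exp (- (h ^ 2) / 2)).
  { intros x. assert (H1 := one_add_sq_pos x).
    assert (H2 := exp_pos (- (h ^ 2 * (1 + x ^ 2)) / 2)).
    assert (H3 : exp (- (h ^ 2 * (1 + x ^ 2)) / 2) <= exp (- (h ^ 2) / 2)).
    { replace (h ^ 2 * (1 + x ^ 2)) with ((1 + x ^ 2) * h ^ 2) by ring.
      apply exp_neg_sq_half_mono. }
    unfold owen_T_integrand. split.
    - apply Rlt_le, Rdiv_lt_0_compat; lra.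
    - apply Rmult_le_reg_r with (1 + x ^ 2); [lra|].
      unfold Rdiv. rewrite Rmult_assoc, Rinv_l by lra. nra. }
  assert (A : Rabs (RInt (owen_T_integrand h) 0 a) <= (a - 0) * exp (- (h ^ 2) / 2)).
  { apply abs_RInt_le_const; [exact Ha | apply ex_RInt_owen_T_integrand |].
    intros t _. rewrite Rabs_pos_eq; apply B. }
  assert (P : 0 <= RInt (owen_T_integrand h) 0 a).
  { apply RInt_ge_0; auto. apply ex_RInt_owen_T_integrand. intros; apply B. }
  rewrite Rabs_pos_eq in A by exact P.
  split; [nra|]. replace (a / (2 * PI) * exp (- (h ^ 2) / 2))
    with (/ (2 * PI) * ((a - 0) * exp (- (h ^ 2) / 2))) by (field; generalize PI_RGT_0; lra).
  apply Rmult_le_compat_l; lra.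
Qed.

(* [T(h, 1) + E(h)^2 / 2] has zero derivative in [h], and [T(0, 1) = atan 1 / (2 PI) = 1/8]. *)
Lemma centered_cdf_sq u : centered_cdf u ^ 2 = 1 / 4 - 2 * owen_T u 1.
Proof.
  assert (H : owen_T u 1 + centered_cdf u ^ 2 / 2 = owen_T 0 1 + centered_cdf 0 ^ 2 / 2).
  { apply is_derive_0_constant with (f := fun u => owen_T u 1 + centered_cdf u ^ 2 / 2).
    intros y. eapply is_derive_eq.
    - apply @is_derive_plus; [apply owen_T_derive_h|].
      apply is_derive_ext with (f := fun z => / 2 * (centered_cdf z * centered_cdf z)).
      { intros; simpl; field. }
      apply is_derive_scal, @is_derive_mult; try apply centered_cdf_derive.
      intros; apply Rmult_comm.
    - rewrite Rmult_1_l. unfold plus, mult; simpl. field. }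
  rewrite owen_T_0_l, centered_cdf_0, atan_1 in H.
  assert (0 < PI) by apply PI_RGT_0.
  replace (PI / 4 / (2 * PI)) with (1 / 8) in H by (field; lra).
  lra.
Qed.

Lemma centered_cdf_le_half u : 0 <= u -> centered_cdf u <= 1 / 2.
Proof.
  intros Hu. assert (H1 := centered_cdf_sq u).
  assert (H2 := owen_T_bounds u 1 ltac:(lra)). assert (H3 := centered_cdf_ge0 u Hu). nra.
Qed.

Lemma centered_cdf_tail u : 0 <= u -> Rabs (centered_cdf u - 1 / 2) <= exp (- (u ^ 2) / 2).
Proof.
  intros Hu.
  assert (H1 := centered_cdf_sq u). assert (H2 := owen_T_bounds u 1 ltac:(lra)).
  assert (H3 := centered_cdf_ge0 u Hu).
  assert (HP : 3 < PI) by (generalize PI2_3_2; lra).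
  assert (Hx := exp_pos (- (u ^ 2) / 2)).
  assert (H4 : 1 / (2 * PI) * exp (- (u ^ 2) / 2) <= / 6 * exp (- (u ^ 2) / 2)).
  { apply Rmult_le_compat_r; [lra|]. unfold Rdiv. rewrite Rmult_1_l.
    apply Rinv_le_contravar; lra. }
  rewrite Rabs_left1; nra.
Qed.

Lemma centered_cdf_lim_m_infty :
  filterlim centered_cdf (Rbar_locally m_infty) (locally (- (1 / 2))).
Proof.
  apply filterlim_m_infty_of_decay with 1; [lra|]. intros u Hu.
  rewrite centered_cdf_opp.
  replace (- centered_cdf u - - (1 / 2)) with (- (centered_cdf u - 1 / 2)) by ring.
  rewrite Rabs_Ropp.
  eapply Rle_trans; [apply centered_cdf_tail; lra | apply exp_neg_sq_half_le_inv; lra].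
Qed.

Lemma std_normal_cdf_centered x : std_normal_cdf x = 1 / 2 + centered_cdf x.
Proof.
  unfold std_normal_cdf. apply is_RInt_gen_unique.
  replace (1 / 2 + centered_cdf x) with (centered_cdf x - - (1 / 2)) by ring.
  apply (is_RInt_gen_antiderivative centered_cdf _ (Rbar_locally m_infty) (at_point x)).
  - apply centered_cdf_derive.
  - apply std_normal_pdf_continuous.
  - apply centered_cdf_lim_m_infty.
  - apply filterlim_at_point_self.
Qed.

Lemma std_normal_cdf_opp_centered x : std_normal_cdf (- x) = 1 / 2 - centered_cdf x.
Proof. rewrite std_normal_cdf_centered, centered_cdf_opp. ring. Qed.

Definition prim_cdf_pdf (a u : R) : R := centered_cdf u / 2 + owen_T u a.

Lemma prim_cdf_pdf_derive a u :
  is_derive (prim_cdf_pdf a) u ((1 / 2 - centered_cdf (a * u)) * std_normal_pdf u).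
Proof.
  eapply is_derive_eq.
  - apply @is_derive_plus; [|apply owen_T_derive_h].
    apply is_derive_ext with (f := fun u => / 2 * centered_cdf u).
    { intros; change (/ 2 * centered_cdf t = centered_cdf t / 2). field. }
    apply is_derive_scal, centered_cdf_derive.
  - unfold plus; simpl. field.
Qed.

Lemma prim_cdf_pdf_tail a u : 0 <= a -> 1 <= u ->
  Rabs (prim_cdf_pdf a u - 1 / 4) <= (1 / 2 + a) / u.
Proof.
  intros Ha Hu. unfold prim_cdf_pdf.
  assert (HP : 3 < PI) by (generalize PI2_3_2; lra).
  assert (H1 := centered_cdf_tail u ltac:(lra)). assert (H2 := owen_T_bounds u a Ha).
  assert (H3 := exp_neg_sq_half_le_inv u ltac:(lra)).
  assert (Hx := exp_pos (- (u ^ 2) / 2)).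
  assert (H4 : a / (2 * PI) <= a).
  { unfold Rdiv. rewrite <- (Rmult_1_r a) at 2. apply Rmult_le_compat_l; [lra|].
    rewrite <- Rinv_1. apply Rinv_le_contravar; lra. }
  replace (centered_cdf u / 2 + owen_T u a - 1 / 4)
    with ((centered_cdf u - 1 / 2) / 2 + owen_T u a) by field.
  apply Rabs_le_between in H1. apply Rabs_le.
  replace ((1 / 2 + a) / u) with (1 / 2 * (1 / u) + a * (1 / u)) by (field; lra).
  split; nra.
Qed.

Lemma is_RInt_gen_cdf_pdf a : 0 <= a ->
  is_RInt_gen (fun u => std_normal_cdf (- (a * u)) * std_normal_pdf u)
    (at_point 0) (Rbar_locally p_infty) (1 / 4 - atan a / (2 * PI)).
Proof.
  intros Ha.
  apply (is_RInt_gen_ext (fun u => (1 / 2 - centered_cdf (a * u)) * std_normal_pdf u)).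
  { apply filter_forall. intros ab x _. now rewrite std_normal_cdf_opp_centered. }
  replace (1 / 4 - atan a / (2 * PI)) with (1 / 4 - prim_cdf_pdf a 0).
  2:{ unfold prim_cdf_pdf. rewrite centered_cdf_0, owen_T_0_l. field. generalize PI_RGT_0; lra. }
  apply (is_RInt_gen_antiderivative (prim_cdf_pdf a) _ (at_point 0) (Rbar_locally p_infty)).
  - apply prim_cdf_pdf_derive.
  - intros x. eapply continuous_of_is_derive, @is_derive_mult.
    + apply @is_derive_minus; [apply is_derive_const | apply centered_cdf_scale_derive].
    + apply std_normal_pdf_derive.
    + intros; apply Rmult_comm.
  - apply filterlim_at_point_self.
  - apply filterlim_p_infty_of_decay with (1 / 2 + a); [lra|].
    intros u Hu. now apply prim_cdf_pdf_tail.
Qed.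

Definition prim_sq_cdf_pdf (a u : R) : R :=
  - (u * std_normal_pdf u * (1 / 2 - centered_cdf (a * u))) + prim_cdf_pdf a u
  + a / (2 * PI * (1 + a ^ 2)) * exp (- ((1 + a ^ 2) * u ^ 2) / 2).

Lemma prim_sq_cdf_pdf_derive a u :
  is_derive (prim_sq_cdf_pdf a) u
    (u ^ 2 * (1 / 2 - centered_cdf (a * u)) * std_normal_pdf u).
Proof.
  eapply is_derive_eq.
  { apply @is_derive_plus; [apply @is_derive_plus|].
    - apply @is_derive_opp, @is_derive_mult; [apply @is_derive_mult| |].
      + apply @is_derive_id.
      + apply std_normal_pdf_derive.
      + intros; apply Rmult_comm.
      + apply @is_derive_minus; [apply @is_derive_const | apply centered_cdf_scale_derive].
      + intros; apply Rmult_comm.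
    - apply prim_cdf_pdf_derive.
    - apply is_derive_scal.
      apply (is_derive_comp exp (fun u => - ((1 + a ^ 2) * u ^ 2) / 2)).
      + apply is_derive_Reals, derivable_pt_lim_exp.
      + auto_derive; auto. }
  assert (HP := PI_RGT_0). assert (Ha := one_add_sq_pos a).
  assert (K : exp (- ((1 + a * (a * 1)) * (u * (u * 1))) / 2)
              = 2 * PI * (std_normal_pdf u * std_normal_pdf (a * u))).
  { rewrite std_normal_pdf_mul. simpl. field. lra. }
  unfold plus, mult, opp, minus, scal, one, zero; simpl. unfold mult; simpl.
  rewrite K. unfold plus, opp; simpl. field. simpl in Ha; lra.
Qed.

Lemma gauss_term_bounds a u : 0 <= a -> 1 <= u ->
  0 <= a / (2 * PI * (1 + a ^ 2)) * exp (- ((1 + a ^ 2) * u ^ 2) / 2) <= a / u.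
Proof.
  intros Ha Hu.
  assert (HP : 3 < PI) by (generalize PI2_3_2; lra).
  assert (H1 := one_add_sq_pos a).
  assert (H2 := exp_pos (- ((1 + a ^ 2) * u ^ 2) / 2)).
  assert (H3 := exp_neg_sq_half_mono u a).
  assert (H4 := exp_neg_sq_half_le_inv u ltac:(lra)).
  assert (H5 : 0 <= a / (2 * PI * (1 + a ^ 2)) <= a).
  { split; [apply Rdiv_le_0_compat; nra|].
    apply Rmult_le_reg_r with (2 * PI * (1 + a ^ 2)); [nra|].
    unfold Rdiv. rewrite Rmult_assoc, Rinv_l by nra.
    assert (1 <= 2 * PI * (1 + a ^ 2)) by nra. nra. }
  replace (a / u) with (a * (1 / u)) by (field; lra).
  split; [nra|]. apply Rmult_le_compat; lra.
Qed.

Lemma prim_sq_cdf_pdf_tail a u : 0 <= a -> 1 <= u ->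
  Rabs (prim_sq_cdf_pdf a u - 1 / 4) <= (1 + (1 / 2 + a) + a) / u.
Proof.
  intros Ha Hu.
  assert (N := prim_cdf_pdf_tail a u Ha Hu).
  assert (G := gauss_term_bounds a u Ha Hu).
  assert (E1 := centered_cdf_ge0 (a * u) ltac:(nra)).
  assert (E2 := centered_cdf_le_half (a * u) ltac:(nra)).
  assert (Q := mul_std_normal_pdf_bounds u ltac:(lra)).
  assert (B : 0 <= u * std_normal_pdf u * (1 / 2 - centered_cdf (a * u)) <= 1 / u).
  { split; [nra|]. apply Rle_trans with (2 / u * (1 / 2)); [nra|]. right; field; lra. }
  unfold prim_sq_cdf_pdf.
  apply Rabs_le_between in N. apply Rabs_le_between.
  replace ((1 + (1 / 2 + a) + a) / u) with (1 / u + (1 / 2 + a) / u + a / u) by (field; lra).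
  split; lra.
Qed.

Lemma is_RInt_gen_sq_cdf_pdf a : 0 <= a ->
  is_RInt_gen (fun u => u ^ 2 * std_normal_cdf (- (a * u)) * std_normal_pdf u)
    (at_point 0) (Rbar_locally p_infty)
    (1 / 4 - atan a / (2 * PI) - a / (2 * PI * (1 + a ^ 2))).
Proof.
  intros Ha.
  apply (is_RInt_gen_ext (fun u => u ^ 2 * (1 / 2 - centered_cdf (a * u)) * std_normal_pdf u)).
  { apply filter_forall. intros ab x _. now rewrite std_normal_cdf_opp_centered. }
  replace (1 / 4 - atan a / (2 * PI) - a / (2 * PI * (1 + a ^ 2)))
    with (1 / 4 - prim_sq_cdf_pdf a 0).
  2:{ unfold prim_sq_cdf_pdf, prim_cdf_pdf. rewrite centered_cdf_0, owen_T_0_l.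
      replace (- ((1 + a ^ 2) * 0 ^ 2) / 2) with 0 by (simpl; field). rewrite exp_0.
      assert (0 < 1 + a ^ 2) by apply one_add_sq_pos.
      field. generalize PI_RGT_0; lra. }
  apply (is_RInt_gen_antiderivative (prim_sq_cdf_pdf a) _ (at_point 0) (Rbar_locally p_infty)).
  - apply prim_sq_cdf_pdf_derive.
  - intros x. eapply continuous_of_is_derive, @is_derive_mult; [apply @is_derive_mult| |].
    + apply @is_derive_pow, @is_derive_id.
    + apply @is_derive_minus; [apply is_derive_const | apply centered_cdf_scale_derive].
    + intros; apply Rmult_comm.
    + apply std_normal_pdf_derive.
    + intros; apply Rmult_comm.
  - apply filterlim_at_point_self.
  - apply filterlim_p_infty_of_decay with (1 + (1 / 2 + a) + a); [lra|].
    intros u Hu. now apply prim_sq_cdf_pdf_tail.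
Qed.

Lemma atan_alt_series_bounds x N : 0 < x < 1 ->
  sum_f_R0 (tg_alt (Ratan_seq x)) (S (2 * N)) <= atan x <=
  sum_f_R0 (tg_alt (Ratan_seq x)) (2 * N).
Proof.
  intros Hx. rewrite atan_eq_ps_atan by lra. unfold ps_atan.
  destruct (in_int x) as [h|h]; [|lra].
  destruct (ps_atan_exists_1 x h) as [v Hv].
  apply alternated_series_ineq; auto.
  - apply Ratan_seq_decreasing; lra.
  - apply Ratan_seq_converging; lra.
Qed.

Ltac atan_bounds x N :=
  let H := fresh "A" in
  assert (H := atan_alt_series_bounds x N ltac:(lra));
  revert H; unfold tg_alt, Ratan_seq; simpl sum_f_R0; simpl INR; simpl pow; intro H.

Lemma PI_bounds : 31415 / 10000 < PI < 31416 / 10000.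
Proof.
  assert (M := Machin_4_5_239).
  atan_bounds (/ 5) 2%nat. atan_bounds (/ 239) 1%nat. lra.
Qed.

Lemma atan_sub_PI4 a : 0 < a -> atan a = PI / 4 + atan ((a - 1) / (1 + a)).
Proof.
  intros Ha.
  assert (B1 := atan_bound a). assert (B2 := atan_bound (atan_sub a 1)).
  assert (P0 : 0 < atan a) by (rewrite <- atan_0; apply atan_increasing; lra).
  rewrite (atan_sub_correct a 1).
  - rewrite atan_1. unfold atan_sub. do 3 f_equal. ring.
  - lra.
  - rewrite atan_1. lra.
  - lra.
Qed.

(* [a^2 int_0^oo u^2 Phi(-a u) phi(u) du], by [is_RInt_gen_sq_cdf_pdf]. *)
Definition speed_profile (a : R) : R :=
  a ^ 2 * (1 / 4 - atan a / (2 * PI) - a / (2 * PI * (1 + a ^ 2))).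

Definition speed_profile_slope (a : R) : R :=
  PI / 2 - atan a - a / (1 + a ^ 2) - a / (1 + a ^ 2) ^ 2.

Lemma atan_derive x : is_derive atan x (/ (1 + x ^ 2)).
Proof. apply is_derive_Reals, derivable_pt_lim_atan. Qed.

Lemma speed_profile_slope_derive x :
  is_derive speed_profile_slope x (- (3 - x ^ 2) / (1 + x ^ 2) ^ 3).
Proof.
  assert (H := one_add_sq_pos x). unfold speed_profile_slope.
  eapply is_derive_eq.
  { apply @is_derive_minus; [apply @is_derive_minus; [apply @is_derive_minus|]|].
    - apply @is_derive_const.
    - apply atan_derive.
    - auto_derive; try reflexivity. simpl in H; lra.
    - auto_derive; try reflexivity. simpl in H; nra. }
  unfold minus, plus, opp, zero; simpl. field. simpl in H; lra.
Qed.

Lemma speed_profile_derive x : is_derive speed_profile x (x / PI * speed_profile_slope x).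
Proof.
  assert (H := one_add_sq_pos x). assert (HP := PI_RGT_0). unfold speed_profile.
  eapply is_derive_eq.
  { apply @is_derive_mult.
    - auto_derive; try reflexivity; auto.
    - apply @is_derive_minus; [apply @is_derive_minus|].
      + apply @is_derive_const.
      + apply is_derive_ext with (f := fun x => / (2 * PI) * atan x).
        { intros t. change (/ (2 * PI) * atan t = atan t / (2 * PI)). field. lra. }
        apply is_derive_scal, atan_derive.
      + auto_derive; try reflexivity. simpl in H; nra.
    - intros; apply Rmult_comm. }
  unfold speed_profile_slope, minus, plus, opp, zero, mult; simpl. field. simpl in H; lra.
Qed.

Lemma speed_profile_slope_decreasing a b : 0 < a -> a < b -> b <= 7 / 5 ->
  speed_profile_slope b < speed_profile_slope a.
Proof.
  intros Ha Hab Hb.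
  destruct (MVT_cor2 speed_profile_slope (fun x => - (3 - x ^ 2) / (1 + x ^ 2) ^ 3) a b Hab)
    as [c [Hc Hc2]].
  - intros c _. apply is_derive_Reals, speed_profile_slope_derive.
  - assert (- (3 - c ^ 2) / (1 + c ^ 2) ^ 3 < 0).
    { apply Rmult_neg_pos; [nra|].
      apply Rinv_0_lt_compat, pow_lt, one_add_sq_pos. }
    nra.
Qed.

Lemma taylor5_atan_lt x : 0 < x <= 5 / 7 ->
  x - x ^ 3 / 3 + x ^ 5 / 5 < x / (1 + x ^ 2) + x ^ 3 / (1 + x ^ 2) ^ 2.
Proof.
  intros Hx. assert (H := one_add_sq_pos x).
  apply Rminus_lt_0.
  replace (x / (1 + x ^ 2) + x ^ 3 / (1 + x ^ 2) ^ 2 - (x - x ^ 3 / 3 + x ^ 5 / 5))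
    with (x * x ^ 2 * (5 - 8 * x ^ 2 - (x ^ 2) ^ 2 - 3 * (x ^ 2) ^ 3) / (15 * (1 + x ^ 2) ^ 2))
    by (field; lra).
  set (t := x ^ 2) in *.
  assert (Ht : 0 < t <= 25 / 49) by (unfold t; nra).
  apply Rdiv_lt_0_compat; [|nra].
  assert (t * t <= 25 / 49 * t) by nra.
  assert (t * (t * t) <= 25 / 49 * (t * t)) by nra.
  apply Rmult_lt_0_compat; [nra | simpl; nra].
Qed.

Lemma speed_profile_slope_neg a : 7 / 5 <= a -> speed_profile_slope a < 0.
Proof.
  intros Ha. set (x := / a).
  assert (Hx : 0 < x <= 5 / 7).
  { unfold x. split; [apply Rinv_0_lt_compat; lra|].
    replace (5 / 7) with (/ (7 / 5)) by field. apply Rinv_le_contravar; lra. }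
  assert (K : speed_profile_slope a = atan x - x / (1 + x ^ 2) - x ^ 3 / (1 + x ^ 2) ^ 2).
  { unfold speed_profile_slope, x. rewrite atan_inv by lra.
    field. split; nra. }
  rewrite K. assert (T := taylor5_atan_lt x Hx).
  atan_bounds x 1%nat. simpl in T. lra.
Qed.

(* Machin's formula and [atan_sub_PI4] reduce [atan] to small arguments, where two or
   three terms of the alternating series give the required precision. *)
Lemma speed_profile_slope_Machin a : 0 < a -> speed_profile_slope a =
  4 * atan (/ 5) - atan (/ 239) - atan ((a - 1) / (1 + a)) - a / (1 + a ^ 2) - a / (1 + a ^ 2) ^ 2.
Proof.
  intros Ha. unfold speed_profile_slope. rewrite (atan_sub_PI4 a Ha), <- Machin_4_5_239.
  field. generalize (one_add_sq_pos a); simpl; lra.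
Qed.

Lemma speed_profile_slope_lo : 0 < speed_profile_slope (12131 / 10000).
Proof.
  rewrite speed_profile_slope_Machin by lra.
  replace ((12131 / 10000 - 1) / (1 + 12131 / 10000)) with (2131 / 22131) by field.
  atan_bounds (/ 5) 2%nat. atan_bounds (/ 239) 1%nat. atan_bounds (2131 / 22131) 2%nat.
  simpl. lra.
Qed.

Lemma speed_profile_slope_hi : speed_profile_slope (4853 / 4000) < 0.
Proof.
  rewrite speed_profile_slope_Machin by lra.
  replace ((4853 / 4000 - 1) / (1 + 4853 / 4000)) with (853 / 8853) by field.
  atan_bounds (/ 5) 2%nat. atan_bounds (/ 239) 1%nat. atan_bounds (853 / 8853) 2%nat.
  simpl. lra.
Qed.

Lemma speed_profile_slope_root :
  exists r, 12131 / 10000 <= r <= 4853 / 4000 /\ speed_profile_slope r = 0.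
Proof.
  destruct (IVT (fun x => - speed_profile_slope x) (12131 / 10000) (4853 / 4000))
    as [r [Hr1 Hr2]].
  - intros x. apply continuity_pt_opp, derivable_continuous_pt.
    eexists. apply is_derive_Reals, speed_profile_slope_derive.
  - lra.
  - generalize speed_profile_slope_lo; lra.
  - generalize speed_profile_slope_hi; lra.
  - exists r. split; [exact Hr1 | lra].
Qed.

Lemma speed_profile_lt_root r : 0 < r <= 7 / 5 -> speed_profile_slope r = 0 ->
  forall a, 0 < a -> a <> r -> speed_profile a < speed_profile r.
Proof.
  intros Hr Hk a Ha Har. assert (HP := PI_RGT_0).
  destruct (Rtotal_order a r) as [h|[h|h]]; [|congruence|].
  - destruct (MVT_cor2 speed_profile (fun x => x / PI * speed_profile_slope x) a r h)
      as [c [Hc Hc2]].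
    + intros c _. apply is_derive_Reals, speed_profile_derive.
    + assert (0 < speed_profile_slope c)
        by (rewrite <- Hk; apply speed_profile_slope_decreasing; lra).
      assert (0 < c / PI) by (apply Rdiv_lt_0_compat; lra).
      assert (0 < c / PI * speed_profile_slope c) by (apply Rmult_lt_0_compat; lra).
      nra.
  - destruct (MVT_cor2 speed_profile (fun x => x / PI * speed_profile_slope x) r a h)
      as [c [Hc Hc2]].
    + intros c _. apply is_derive_Reals, speed_profile_derive.
    + assert (speed_profile_slope c < 0).
      { destruct (Rle_lt_dec c (7 / 5)).
        - rewrite <- Hk. apply speed_profile_slope_decreasing; lra.
        - apply speed_profile_slope_neg; lra. }
      assert (0 < c / PI) by (apply Rdiv_lt_0_compat; lra).
      assert (c / PI * speed_profile_slope c < 0) by (apply Rmult_pos_neg; lra).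
      nra.
Qed.

Lemma acceptance_at_root a : 12131 / 10000 <= a <= 4853 / 4000 ->
  Rabs (1 - 2 * atan a / PI - 439 / 1000) <= 5 / 10000.
Proof.
  intros Ha. assert (HP := PI_bounds).
  assert (L : atan (12131 / 10000) <= atan a).
  { destruct (Req_dec a (12131 / 10000)) as [e|e]; [rewrite e; lra|].
    apply Rlt_le, atan_increasing; lra. }
  assert (U : atan a <= atan (4853 / 4000)).
  { destruct (Req_dec a (4853 / 4000)) as [e|e]; [rewrite e; lra|].
    apply Rlt_le, atan_increasing; lra. }
  rewrite (atan_sub_PI4 (12131 / 10000)) in L by lra.
  rewrite (atan_sub_PI4 (4853 / 4000)) in U by lra.
  replace ((12131 / 10000 - 1) / (1 + 12131 / 10000)) with (2131 / 22131) in L by field.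
  replace ((4853 / 4000 - 1) / (1 + 4853 / 4000)) with (853 / 8853) in U by field.
  atan_bounds (2131 / 22131) 1%nat. atan_bounds (853 / 8853) 1%nat.
  replace (1 - 2 * atan a / PI - 439 / 1000) with ((561 / 1000 * PI - 2 * atan a) / PI)
    by (field; lra).
  assert (D : (561 / 1000 * PI - 2 * atan a) / PI * PI = 561 / 1000 * PI - 2 * atan a)
    by (field; lra).
  apply Rabs_le. split; apply Rmult_le_reg_r with PI; lra.
Qed.

Lemma g_speed_speed_profile I c xi l : 0 < c * I -> 0 < xi -> 0 <= l ->
  g_speed I c xi l
  = 16 * c / (xi * sqrt (c * I)) ^ 2 * speed_profile (l * xi * sqrt (c * I) / 2).
Proof.
  intros hcI hxi hl.
  assert (hs : 0 < sqrt (c * I)) by (apply sqrt_lt_R0; lra).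
  set (s := sqrt (c * I)) in *. set (a := l * xi * s / 2).
  assert (ha : 0 <= a) by (unfold a; assert (0 <= l * xi) by nra; nra).
  unfold g_speed, int_0_infty. fold s.
  erewrite is_RInt_gen_unique.
  2:{ apply (is_RInt_gen_ext (fun u => u ^ 2 * std_normal_cdf (- (a * u)) * std_normal_pdf u)).
      - apply filter_forall. intros ab u _. unfold a. do 3 f_equal. field.
      - now apply is_RInt_gen_sq_cdf_pdf. }
  unfold speed_profile. fold a. replace l with (2 * a / (xi * s)) at 1 by (unfold a; field; lra).
  assert (Ha2 := one_add_sq_pos a). assert (HP := PI_RGT_0).
  field. repeat split; lra.
Qed.

Lemma accept_rate_atan I c xi l : 0 < c * I -> 0 < xi -> 0 <= l ->
  accept_rate I c xi l = 1 - 2 * atan (l * xi * sqrt (c * I) / 2) / PI.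
Proof.
  intros hcI hxi hl.
  assert (hs : 0 < sqrt (c * I)) by (apply sqrt_lt_R0; lra).
  set (s := sqrt (c * I)) in *. set (a := l * xi * s / 2).
  assert (ha : 0 <= a) by (unfold a; assert (0 <= l * xi) by nra; nra).
  unfold accept_rate, int_0_infty. fold s.
  erewrite is_RInt_gen_unique.
  2:{ apply (is_RInt_gen_ext (fun u => std_normal_cdf (- (a * u)) * std_normal_pdf u)).
      - apply filter_forall. intros ab u _. unfold a. do 2 f_equal. field.
      - now apply is_RInt_gen_cdf_pdf. }
  field. generalize PI_RGT_0; lra.
Qed.

Theorem corollary4 (I xi c : R) (hI : 0 < I) (hxi : 0 < xi) (hc0 : 0 < c) (hc1 : c <= 1) :
  exists l_opt : R,
    0 < l_opt /\
    (forall l : R, 0 < l -> l <> l_opt -> g_speed I c xi l < g_speed I c xi l_opt) /\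
    (exists K : R, Rabs (K - 2426 / 1000) <= 5 / 10000 /\ l_opt = K / (xi * sqrt (c * I))) /\
    Rabs (accept_rate I c xi l_opt - 439 / 1000) <= 5 / 10000.
Proof.
  destruct speed_profile_slope_root as [r [Hr Hk]].
  assert (hcI : 0 < c * I) by nra.
  assert (hs : 0 < sqrt (c * I)) by (apply sqrt_lt_R0; lra).
  set (s := sqrt (c * I)) in *.
  assert (hxs : 0 < xi * s) by nra.
  assert (hl : 0 < 2 * r / (xi * s)) by (apply Rdiv_lt_0_compat; lra).
  assert (ar : 2 * r / (xi * s) * xi * s / 2 = r) by (field; lra).
  exists (2 * r / (xi * s)). split; [exact hl | split; [| split]].
  - intros l Hl Hne.
    rewrite !g_speed_speed_profile by lra. fold s. rewrite ar.
    apply Rmult_lt_compat_l.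
    { apply Rdiv_lt_0_compat; [lra | apply pow_lt; lra]. }
    apply speed_profile_lt_root; [lra | exact Hk | |].
    + apply Rdiv_lt_0_compat; [repeat apply Rmult_lt_0_compat|]; lra.
    + intros e. apply Hne. rewrite <- e. field. lra.
  - exists (2 * r). split; [apply Rabs_le; lra | reflexivity].
  - rewrite accept_rate_atan by lra. fold s. rewrite ar.
    now apply acceptance_at_root.
Qed.
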